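(* If $\mathcal{O}$ is a D-cube, then the L-graph $\mathcal{L}_{\mathcal{O}}(\emptyset)$ is acyclic.
   Context: For sets $U,V$ let $U\oplus V=(U\cup V)\setminus(U\cap V)$. An $n$-cube orientation is a directed graph $\mathcal{O}$ on the vertex set of all subsets of $[n]$ containing, for each vertex $V$ and $i\in[n]$, exactly one of the directed edges $(V,V\oplus\{i\})$, $(V\oplus\{i\},V)$; its outmap is $\phi(V)=\{i: (V,V\oplus\{i\})\in\mathcal{O}\}$. For a vertex $V$, the L-graph $\mathcal{L}_{\mathcal{O}}(V)$ has vertex set $[n]\setminus V$ and an arc $(i,j)$ for distinct $i,j\notin V$ whenever $j\in\phi(V)\oplus\phi(V\cup\{i\})$; in particular $\mathcal{L}_{\mathcal{O}}(\emptyset)$ has vertex set $[n]$. Given $M\in\mathbb{R}^{n\times n}$ and $V\subseteq[n]$, let $M(V)$ be the matrix whose $i$-th column is $-M_i$ if $i\in V$ and the $i$-th unit vector if $i\notin V$. A D-cube is an $n$-cube orientation with outmap $\phi(V)=\{i\in[n]: (M(V)^{-1}\mathbf{q})_i<0\}$, where $M$ is symmetric positive definite and $\mathbf{q}\in\mathbb{R}^n$ is generic, i.e. no entry of $M(V)^{-1}\mathbf{q}$ is zero for any $V\subseteq[n]$. (Such an orientation is a unique sink orientation.) *)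

From HB Require Import structures.
From mathcomp Require Import all_boot all_order all_algebra.
Set Implicit Arguments. Unset Strict Implicit. Unset Printing Implicit Defensive.
Import Order.TTheory GRing.Theory Num.Theory.
Local Open Scope ring_scope.

Definition symdiff (T : finType) (U V : {set T}) : {set T} :=
  (U :|: V) :\: (U :&: V).

Definition sym_posdef (R : realFieldType) (n : nat) (M : 'M[R]_n) : Prop :=
  M^T = M /\ forall x : 'cV[R]_n, x != 0 -> 0 < (x^T *m M *m x) 0 0.

Definition MV (R : realFieldType) (n : nat) (M : 'M[R]_n) (V : {set 'I_n}) : 'M[R]_n :=
  \matrix_(r, c) (if c \in V then - M r c else (r == c)%:R).

Definition generic_q (R : realFieldType) (n : nat) (M : 'M[R]_n) (q : 'cV[R]_n) : Prop :=
  forall (V : {set 'I_n}) (i : 'I_n), (invmx (MV M V) *m q) i 0 != 0.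

Definition Dcube_outmap (R : realFieldType) (n : nat) (M : 'M[R]_n) (q : 'cV[R]_n)
  (V : {set 'I_n}) : {set 'I_n} :=
  [set i | (invmx (MV M V) *m q) i 0 < 0].

Definition Lgraph (n : nat) (phi : {set 'I_n} -> {set 'I_n}) (V : {set 'I_n}) : rel 'I_n :=
  fun i j => [&& i \notin V, j \notin V, i != j & j \in symdiff (phi V) (phi (i |: V))].

Definition acyclic (T : finType) (e : rel T) : Prop :=
  ~ exists (x : T) (p : seq T), [/\ p != [::], path e x p & last x p = x].

(* The potential k |-> q_k^2 / M_kk strictly decreases along every arc of the
   L-graph at the empty vertex.  Pivoting M(∅) = I on the column i gives
   (M({i})^-1 q)_j = q_j - t with t = M_ji q_i / M_ii, so an arc (i, j) means
   that q_j and q_j - t have opposite signs, whence q_j^2 <= t^2.  Positive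
   definiteness of the 2x2 principal minor, M_ji^2 < M_ii M_jj, then turns
   q_j^2 <= t^2 into q_j^2 / M_jj < q_i^2 / M_ii. *)
From HB Require Import structures.
From mathcomp Require Import all_boot all_order all_algebra.
From mathcomp Require Import ring lra.
Set Implicit Arguments. Unset Strict Implicit. Unset Printing Implicit Defensive.
Import Order.TTheory GRing.Theory Num.Theory.
Local Open Scope ring_scope.

Lemma acyclic_of_potential (T : finType) (d : Order.disp_t) (U : porderType d)
    (e : rel T) (f : T -> U) :
  (forall x y, e x y -> (f y < f x)%O) -> acyclic e.
Proof.
move=> f_decr.
have path_le x p : path e x p -> (f (last x p) <= f x)%O.
  elim: p x => [|y p IHp] x //= /andP[exy pth].
  exact: le_trans (IHp _ pth) (ltW (f_decr _ _ exy)).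
case=> x [[|y p] [//= _ /andP[exy pth] lastx]].
have := le_lt_trans (path_le _ _ pth) (f_decr _ _ exy).
by rewrite /= in lastx; rewrite lastx ltxx.
Qed.

Lemma in_symdiff (T : finType) (U V : {set T}) x :
  (x \in symdiff U V) = ((x \in U) != (x \in V)).
Proof. by rewrite !inE; case: (x \in U); case: (x \in V). Qed.

Section PositiveDefinite.

Variables (R : realFieldType) (n : nat) (M : 'M[R]_n).
Hypothesis M_pd : sym_posdef M.

Lemma quad_form_delta2 i j (a b : R) :
  let x : 'cV_n := a *: delta_mx i 0 + b *: delta_mx j 0 in
  (x^T *m M *m x) 0 0 = a * a * M i i + a * b * M i j + b * a * M j i + b * b * M j j.
Proof.
move=> x.
have -> : x^T = a *: delta_mx 0 i + b *: delta_mx 0 j.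
  by apply/matrixP=> r c; rewrite !mxE !(ord1 r) !eqxx !andbT.
rewrite /x !(mulmxDl, mulmxDr) -!scalemxAl -!scalemxAr -!rowE -!colE.
rewrite !(mxE, big_ord1); lra.
Qed.

Lemma sym_posdef_diag_gt0 i : 0 < M i i.
Proof.
case: M_pd => _ /(_ (1 *: delta_mx i 0 + 0 *: delta_mx i 0)).
rewrite quad_form_delta2 !(mul0r, mulr0, addr0, mul1r) scale0r addr0 scale1r.
apply; apply/eqP=> /matrixP/(_ i 0); rewrite !mxE !eqxx => /eqP.
by rewrite oner_eq0.
Qed.

Lemma sym_posdef_offdiag_sqr_lt i j : i != j -> M j i ^+ 2 < M i i * M j j.
Proof.
move=> neq_ij; case: M_pd => symM /(_ (M i j *: delta_mx i 0 - M i i *: delta_mx j 0)).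
have Mji : M j i = M i j by rewrite -{1}symM mxE.
have Mii_gt0 := sym_posdef_diag_gt0 i.
rewrite -scaleNr quad_form_delta2 Mji.
have -> : M i j * M i j * M i i + M i j * - M i i * M i j + - M i i * M i j * M i j
          + - M i i * - M i i * M j j = M i i * (M i i * M j j - M i j ^+ 2) by ring.
rewrite pmulr_rgt0 ?subr_gt0 //; apply.
apply/eqP=> /matrixP/(_ j 0); rewrite !mxE eq_sym (negbTE neq_ij) => /eqP.
by rewrite !eqxx mulr0 add0r mulr1 oppr_eq0 gt_eqF.
Qed.

End PositiveDefinite.

Section Pivot.

Variables (R : realFieldType) (n : nat) (M : 'M[R]_n) (i : 'I_n).

Lemma MV0 : MV M set0 = 1%:M.
Proof. by apply/matrixP=> r c; rewrite !mxE in_set0. Qed.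

Lemma MV1_mulmx p (Y : 'M_(n, p)) r c :
  (MV M [set i] *m Y) r c = (if r == i then 0 else Y r c) - M r i * Y i c.
Proof.
rewrite mxE (bigD1 i) //= !mxE in_set1 eqxx mulNr addrC.
congr (_ - _); rewrite (eq_bigr (fun k => (r == k)%:R * Y k c)); last first.
  by move=> k /negbTE neq_ki; rewrite mxE in_set1 neq_ki.
case: eqP => [->|/eqP neq_ri].
  by rewrite big1 // => k neq_ki; rewrite eq_sym (negbTE neq_ki) mul0r.
rewrite (bigD1 r) //= eqxx mul1r big1 ?addr0 // => k /andP[_ neq_kr].
by rewrite eq_sym (negbTE neq_kr) mul0r.
Qed.

Hypothesis Mii_neq0 : M i i != 0.

Lemma MV1_unit : MV M [set i] \in unitmx.
Proof.
pose N : 'M_n := \matrix_(r, c) (if r == i then - (i == c)%:R / M i i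
                                  else (r == c)%:R - M r i * (i == c)%:R / M i i).
suff /mulmx1_unit[] : MV M [set i] *m N = 1%:M by [].
apply/matrixP=> r c; rewrite MV1_mulmx !mxE eqxx /=.
by case: (r =P i) => [->|_] /=; field.
Qed.

Lemma invmx_MV1_mul_entry (y : 'cV_n) j : j != i ->
  (invmx (MV M [set i]) *m y) j 0 = y j 0 - M j i * y i 0 / M i i.
Proof.
move=> /negbTE neq_ji; set x := invmx _ *m y.
have Mx : MV M [set i] *m x = y by rewrite mulKVmx // MV1_unit.
have := congr1 (fun A : 'cV_n => A i 0) Mx; rewrite /= MV1_mulmx eqxx => xi.
have := congr1 (fun A : 'cV_n => A j 0) Mx; rewrite /= MV1_mulmx neq_ji => xj.
by rewrite -xi -xj; field.
Qed.

End Pivot.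

Section SignChange.

Variable R : realFieldType.

Lemma sign_change_sqr_le (d t : R) :
  (d < 0) != (d - t < 0) -> d ^+ 2 <= t ^+ 2 /\ t != 0.
Proof.
case: (ltP d 0) => d_sign; case: (ltP (d - t) 0) => dt_sign //= _.
  by split; [nra | apply/eqP=> t0; move: dt_sign; rewrite t0 subr0 leNgt d_sign].
by split; [nra | apply/eqP=> t0; move: dt_sign; rewrite t0 subr0 ltNge d_sign].
Qed.

Lemma sign_change_sqr_div_lt (a b m c d : R) :
  0 < a -> 0 < b -> m ^+ 2 < a * b -> (d < 0) != (d - m * c / a < 0) ->
  d ^+ 2 / b < c ^+ 2 / a.
Proof.
move=> a_gt0 b_gt0 m_lt /sign_change_sqr_le[d_le t_neq0].
rewrite -mulrA in d_le t_neq0; set u := c / a in d_le t_neq0.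
have u_neq0 : u != 0 by apply: contraNneq t_neq0 => ->; rewrite mulr0.
have u2_gt0 : 0 < u ^+ 2 by rewrite exprn_even_gt0.
have -> : c ^+ 2 / a = a * u ^+ 2 by rewrite /u; field; rewrite gt_eqF.
rewrite ltr_pdivrMr //; nra.
Qed.

End SignChange.

Definition Dcube_potential (R : realFieldType) n (M : 'M[R]_n) (q : 'cV[R]_n) k :=
  q k 0 ^+ 2 / M k k.

Lemma Lgraph0_Dcube_potential_lt (R : realFieldType) n (M : 'M[R]_n) (q : 'cV[R]_n) i j :
  sym_posdef M -> Lgraph (Dcube_outmap M q) set0 i j ->
  Dcube_potential M q j < Dcube_potential M q i.
Proof.
move=> M_pd /and4P[_ _ neq_ij]; have Mii_gt0 := sym_posdef_diag_gt0 M_pd i.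
rewrite in_symdiff /Dcube_outmap setU0 MV0 invmx1 mul1mx !inE.
have neq_ji : j != i by rewrite eq_sym.
rewrite (invmx_MV1_mul_entry (lt0r_neq0 Mii_gt0) q neq_ji) => sign_change.
exact: sign_change_sqr_div_lt Mii_gt0 (sym_posdef_diag_gt0 M_pd j)
  (sym_posdef_offdiag_sqr_lt M_pd neq_ij) sign_change.
Qed.

Theorem lemma5p3 (R : realFieldType) (n : nat) (M : 'M[R]_n) (q : 'cV[R]_n) :
  sym_posdef M -> generic_q M q ->
  acyclic (Lgraph (Dcube_outmap M q) set0).
Proof.
move=> M_pd _; apply: (acyclic_of_potential (f := Dcube_potential M q)) => i j.
exact: Lgraph0_Dcube_potential_lt.
Qed.
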